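(* Let $k\ge2$, $d=2^k+1$, and let $f(x)=x^d+g(x)$ with $g(x)=\sum_{j=0}^{2^{k-1}+1}a_jx^j\in\mathbb{F}_q[x]$. Suppose there is an index $j$ with $a_j\neq0$ such that $\phi_j(x,y,z)$ is nonzero and relatively prime to $\phi_d(x,y,z)$ in $\overline{\mathbb{F}_q}[x,y,z]$. Then $\phi(x,y,z)$ is absolutely irreducible.
   Context: Let $q=2^m$. For an integer $j\ge0$ let $\phi_j(x,y,z)=\dfrac{x^j+y^j+z^j+(x+y+z)^j}{(x+y)(x+z)(y+z)}$, a homogeneous polynomial of degree $j-3$ over $\mathbb{F}_2$. For $f\in\mathbb{F}_q[x]$ let $\phi(x,y,z)=\dfrac{f(x)+f(y)+f(z)+f(x+y+z)}{(x+y)(x+z)(y+z)}\in\mathbb{F}_q[x,y,z]$. Absolutely irreducible means irreducible (and nonconstant) over $\overline{\mathbb{F}_q}$. *)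

From HB Require Import structures.
From mathcomp Require Import all_boot all_order all_algebra all_field.
Set Implicit Arguments. Unset Strict Implicit. Unset Printing Implicit Defensive.
Import GRing.Theory.
Local Open Scope ring_scope.

(* Trivariate polynomials over K: K[x][y][z], i.e. {poly {poly {poly K}}}.
   Variable z is the outermost 'X, y is 'X%:P, x is 'X%:P%:P. *)
Definition poly3 (K : nzRingType) := {poly {poly {poly K}}}.

Definition PX {K : nzRingType} : poly3 K := ('X%:P)%:P.
Definition PY {K : nzRingType} : poly3 K := 'X%:P.
Definition PZ {K : nzRingType} : poly3 K := 'X.

Definition C3 {K : nzRingType} (c : K) : poly3 K := c%:P%:P%:P.

Definition const3 {K : nzRingType} (p : poly3 K) : Prop := exists c : K, p = C3 c.

Definition dvd3 {K : comNzRingType} (r p : poly3 K) : Prop := exists c : poly3 K, p = c * r.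

Definition irreducible3 {K : comNzRingType} (p : poly3 K) : Prop :=
  ~ const3 p /\ forall a b : poly3 K, p = a * b -> const3 a \/ const3 b.

Definition relprime3 {K : comNzRingType} (p q : poly3 K) : Prop :=
  forall r : poly3 K, dvd3 r p -> dvd3 r q -> const3 r.

Definition eval3 {K : comNzRingType} (f : {poly K}) (t : poly3 K) : poly3 K :=
  (map_poly (@C3 K) f).[t].

Definition numj {K : comNzRingType} (j : nat) : poly3 K :=
  PX ^+ j + PY ^+ j + PZ ^+ j + (PX + PY + PZ) ^+ j.

Definition numf {K : comNzRingType} (f : {poly K}) : poly3 K :=
  eval3 f PX + eval3 f PY + eval3 f PZ + eval3 f (PX + PY + PZ).

Definition den3 {K : comNzRingType} : poly3 K :=
  (PX + PY) * (PX + PZ) * (PY + PZ).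

From HB Require Import structures.
From mathcomp Require Import all_boot all_order all_algebra all_field zify ring.
Import GRing.Theory.
Set Implicit Arguments. Unset Strict Implicit. Unset Printing Implicit Defensive.
Local Open Scope ring_scope.

(* Substitute (tx, ty, tz) for (x, y, z): phi becomes the polynomial
   Phi(t) = sum_j a_j phi_j t^(j-3), whose coefficients of t^i for
   2^(k-1) - 1 <= i < 2^k - 2 vanish and whose leading coefficient is phi_d.
   A factorization phi = P Q scales to Phi = P(t) Q(t), where the coefficient
   of t^n has z-degree at most n.  Since phi_d has full z-degree and is
   squarefree in z (in characteristic 2 the z-derivative of its numerator is a
   nonzero constant), the leading coefficients of P(t) and Q(t) are coprime of
   full z-degree, and the gap then forces the factor of lower t-degree, say
   Q(t), to be a monomial L t^s.  Thus Q = L divides phi_d and a_j phi_j, and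
   is constant because phi_j and phi_d are relatively prime. *)

Lemma map_polyC_hornerX (R : comNzRingType) (p : {poly R}) :
  (map_poly polyC p).['X] = p.
Proof.
rewrite horner_coef size_map_polyC -[RHS]coefK poly_def.
by apply: eq_bigr => i _; rewrite coef_map mul_polyC.
Qed.

Lemma size_map_tofrac (A : idomainType) (p : {poly A}) :
  size (map_poly (@tofrac A) p) = size p.
Proof. by rewrite size_map_inj_poly // => x y /eqP; rewrite tofrac_eq => /eqP. Qed.

Section ScaleLift.
Variables (S : comNzRingType) (sc : {rmorphism S -> {poly S}}).

(* If [sc] multiplies the variables of [S] by a new variable [t], then
   [scale_lift sc] also multiplies the variable of [{poly S}] by [t]. *)
Definition scale_lift (p : {poly S}) : {poly {poly S}} :=
  (map_poly (map_poly polyC \o sc) p).['X * 'X%:P].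

Lemma scale_lift_is_zmod_morphism : zmod_morphism scale_lift.
Proof. by move=> p q; rewrite /scale_lift rmorphB hornerD hornerN. Qed.

Lemma scale_lift_is_monoid_morphism : monoid_morphism scale_lift.
Proof.
split; first by rewrite /scale_lift rmorph1 hornerC.
by move=> p q; rewrite /scale_lift rmorphM hornerM.
Qed.

HB.instance Definition _ :=
  GRing.isZmodMorphism.Build _ _ scale_lift scale_lift_is_zmod_morphism.
HB.instance Definition _ :=
  GRing.isMonoidMorphism.Build _ _ scale_lift scale_lift_is_monoid_morphism.

Lemma scale_liftC c : scale_lift c%:P = map_poly polyC (sc c).
Proof. by rewrite /scale_lift map_polyC hornerC. Qed.

Lemma scale_liftX : scale_lift 'X = 'X * 'X%:P.
Proof. by rewrite /scale_lift map_polyX hornerX. Qed.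

Lemma scale_lift_horner1 :
  (forall c, (sc c).[1] = c) -> forall p, (scale_lift p).[1] = p.
Proof.
move=> sc1 p; rewrite /scale_lift.
rewrite -[LHS]/(horner_eval 1 ((map_poly _ p).['X * 'X%:P])).
rewrite -(horner_map (horner_eval 1)) /= horner_evalE.
rewrite hornerM hornerX hornerC mul1r -map_poly_comp -[RHS]map_polyC_hornerX.
congr (_.[_]); apply: eq_map_poly => c /=.
by rewrite horner_evalE -[X in _.[X]](rmorph1 polyC) horner_map sc1.
Qed.

Lemma size_coef_scale_lift p n : leq (size (scale_lift p)`_n) n.+1.
Proof.
have hs : (size (map_poly (map_poly polyC \o sc) p) <= size p)%N by exact: size_poly.
rewrite /scale_lift (horner_coef_wide _ hs) coef_sum.
apply: (big_ind (fun q : {poly S} => size q <= n.+1)%N).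
- by rewrite size_poly0.
- by move=> u v hu hv; rewrite (leq_trans (size_polyD _ _)) // geq_max hu hv.
move=> i _; rewrite exprMn -polyC_exp mulrCA mulrC coefMXn.
case: ltnP => hi; first by rewrite size_poly0.
rewrite coefMC coef_map /= coef_map /= mul_polyC (leq_trans (size_scale_leq _ _)) //.
by rewrite size_polyXn ltnS.
Qed.
End ScaleLift.

Section Homogeneous.
Variables (S : comNzRingType) (sc : {rmorphism S -> {poly S}}).

Definition homog n (u : S) := sc u = u%:P * 'X^n.

Lemma homogD n u v : homog n u -> homog n v -> homog n (u + v).
Proof. by rewrite /homog rmorphD => -> ->; rewrite polyCD mulrDl. Qed.

Lemma homogM m n u v : homog m u -> homog n v -> homog (m + n) (u * v).
Proof.
rewrite /homog rmorphM => -> ->; rewrite polyCM exprD.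
by rewrite -!mulrA; congr (_ * _); rewrite mulrCA.
Qed.

Lemma homogXn n u : homog 1 u -> homog n (u ^+ n).
Proof. by rewrite /homog rmorphXn => ->; rewrite exprMn polyC_exp -exprM mul1n. Qed.
End Homogeneous.

Lemma coprimep_of_dvdp_deriv_const (L : fieldType) (a b N : {poly L}) c :
  c != 0 -> N^`() = c%:P -> a * b %| N -> coprimep a b.
Proof.
move=> c0 dN abN; set G := gcdp a b.
have GGN : G * G %| N.
  by apply: dvdp_trans abN; apply: dvdp_mul; [exact: dvdp_gcdl | exact: dvdp_gcdr].
have [H defN] := dvdpP _ _ GGN.
have G_c : G %| c%:P.
  rewrite -dN defN !derivM; apply: dvdp_add; first by rewrite mulrA dvdp_mull.
  by apply: dvdp_mull; apply: dvdp_add; [apply: dvdp_mull | apply: dvdp_mulr].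
have c0P : c%:P != 0 by rewrite polyC_eq0.
have G_neq0 : G != 0 by apply: contraNneq c0P => G_eq0; move: G_c; rewrite G_eq0 dvd0p.
have := dvdp_leq c0P G_c; rewrite size_polyC c0 /coprimep -/G eqn_leq => ->.
by rewrite size_poly_gt0.
Qed.

Lemma coef_mul_lead_split (R : comNzRingType) (P Q : {poly R}) i :
  (forall j, (i < j < (size Q).-1)%N -> Q`_j = 0) ->
  exists w, (P * Q)`_((size P).-1 + i) = lead_coef P * Q`_i + w * lead_coef Q.
Proof.
move=> Qgap; set s := (size P).-1; set t := (size Q).-1.
have i_lt : (i < (s + i).+1)%N by rewrite ltnS leq_addl.
pose i' := Ordinal i_lt.
exists (\sum_(j < (s + i).+1 | j != i') (if j == t :> nat then P`_(s + i - j) else 0)).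
rewrite coefMr (bigD1 i') //= addnK mulr_suml [lead_coef P]lead_coefE -/s.
congr (_ + _); apply: eq_bigr => j ji; have {}ji : j != i :> nat := ji.
case: eqP => [-> | jt]; first by rewrite lead_coefE.
rewrite mul0r; case: (ltngtP j i) => [j_lt_i | i_lt_j | j_eq_i].
- by rewrite nth_default ?mul0r //; apply: leq_trans (leqSpred _) _; rewrite -/s; lia.
- case: (ltngtP j t) => [j_lt_t | t_lt_j | /jt //]; first by rewrite Qgap ?mulr0 ?i_lt_j.
  by rewrite [Q`_j]nth_default ?mulr0 // (leq_trans (leqSpred _) t_lt_j).
- by rewrite j_eq_i eqxx in ji.
Qed.

Section MonomialFactor.
Variables (A : idomainType) (P Q : {poly {poly A}}).
Local Notation D := (size (P * Q)).-1.
Local Notation tofracP := (map_poly (@tofrac A)).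
Hypotheses (PQ_neq0 : P * Q != 0)
  (size_coefP : forall n, leq (size P`_n) n.+1)
  (size_coefQ : forall n, leq (size Q`_n) n.+1)
  (size_QP : (size Q <= size P)%N)
  (size_lead : size (lead_coef (P * Q)) = D.+1)
  (coef_gap : forall i, (D./2 <= i < D)%N -> (P * Q)`_i = 0)
  (lead_sqfree : forall a b,
     a * b = lead_coef (P * Q) -> coprimep (tofracP a) (tofracP b)).

Lemma factors_neq0 : P != 0 /\ Q != 0.
Proof. by apply/andP; rewrite -negb_or -mulf_eq0. Qed.

Lemma size_lead_coef_right : size (lead_coef Q) = size Q.
Proof.
have [P_neq0 Q_neq0] := factors_neq0.
have LP := size_coefP (size P).-1; have LQ := size_coefQ (size Q).-1.
rewrite -!lead_coefE prednK ?size_poly_gt0 // in LP LQ.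
move: size_lead; rewrite lead_coefM size_mul ?lead_coef_eq0 // size_mul //.
move: LP LQ; rewrite -!size_poly_gt0 in P_neq0 Q_neq0.
(* [size] occurs here at distinct but convertible instances, which [lia] would
   take for distinct atoms; generalizing the sizes identifies them. *)
by move: (size (lead_coef P)) (size (lead_coef Q)) (size P) (size Q) P_neq0 Q_neq0; lia.
Qed.

(* Were Q_i t^i the highest term of Q below its leading one, the coefficient of
   t^(s+i) in P Q would lie in the gap, making lead P * Q_i a multiple of
   lead Q, although lead Q is coprime to lead P and of larger z-degree. *)
Lemma factor_monomial_of_gap : Q = (lead_coef Q)%:P * 'X^((size Q).-1).
Proof.
have [P_neq0 Q_neq0] := factors_neq0.
have sP : (0 < size P)%N by rewrite size_poly_gt0.
have sQ : (0 < size Q)%N by rewrite size_poly_gt0.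
set t := (size Q).-1; set Q1 := take_poly t Q.
have Q1_eq0 : Q1 = 0.
  apply: contraTeq isT => Q1_neq0; set i := (size Q1).-1.
  have i_lt : (i < t)%N by rewrite /i prednK ?size_poly_gt0 ?size_take_poly.
  have Qi : Q`_i = lead_coef Q1 by rewrite lead_coefE coef_take_poly i_lt.
  have Qgap j : (i < j < t)%N -> Q`_j = 0.
    move=> /andP[ij jt]; have := coef_take_poly t Q j; rewrite jt => <-.
    by rewrite nth_default // -/Q1 (leq_trans (leqSpred _) ij).
  have [w Qi_w] := coef_mul_lead_split P Qgap.
  have : (P * Q)`_((size P).-1 + i) = 0.
    apply: coef_gap; rewrite size_mul //.
    by rewrite /t in i_lt; move: (size P) (size Q) sP sQ size_QP i_lt; lia.
  rewrite Qi_w => /eqP; rewrite addr_eq0 => /eqP LPQi.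
  have : tofracP (lead_coef Q) %| tofracP (lead_coef P) * tofracP Q`_i.
    by rewrite -rmorphM LPQi rmorphN dvdpNr rmorphM dvdp_mull.
  rewrite Gauss_dvdpr; last by apply: lead_sqfree; rewrite lead_coefM mulrC.
  have Qi_neq0 : tofracP Q`_i != 0.
    by rewrite -size_poly_eq0 size_map_tofrac size_poly_eq0 Qi lead_coef_eq0.
  move=> /(dvdp_leq Qi_neq0); rewrite !size_map_tofrac size_lead_coef_right.
  rewrite /t in i_lt; move: (size_coefQ i) i_lt; move: (size Q) (size Q`_i).
  by move=> *; lia.
rewrite -{1}(poly_take_drop t Q) -/Q1 Q1_eq0 add0r; congr (_ * _).
apply/polyP => i; rewrite coef_drop_poly coefC; case: i => [|i] /=.
  by rewrite lead_coefE.
by rewrite nth_default // /t; move: (size Q) => n; lia.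
Qed.
End MonomialFactor.

Section Scale3.
Variable K : comNzRingType.
Local Notation R := (poly3 K).

(* [scale3 p] is p(tx, ty, tz) as a polynomial in [t]. *)
Definition scale3 : {rmorphism R -> {poly R}} :=
  scale_lift (scale_lift (scale_lift polyC)).

Lemma scale3_horner1 (p : R) : (scale3 p).[1] = p.
Proof. by do 3![apply: scale_lift_horner1 => ?]; rewrite hornerC. Qed.

Lemma homog_C3 c : homog scale3 0 (C3 c).
Proof.
rewrite /homog mulr1 /scale3 /C3 /=; do 3!rewrite scale_liftC /=.
by rewrite !map_polyC.
Qed.

Lemma homog_PX : homog scale3 1 PX.
Proof.
rewrite /homog /scale3 /PX /=; do 2!rewrite scale_liftC /=.
by rewrite scale_liftX !rmorphM /= !map_polyX !map_polyC mulrC.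
Qed.

Lemma homog_PY : homog scale3 1 PY.
Proof.
rewrite /homog /scale3 /PY /= scale_liftC /=.
by rewrite scale_liftX !rmorphM /= !map_polyX !map_polyC mulrC.
Qed.

Lemma homog_PZ : homog scale3 1 PZ.
Proof. by rewrite /homog /scale3 /PZ /= scale_liftX mulrC. Qed.

Lemma homog_numj n : homog scale3 n (numj n).
Proof.
have hXYZ := homogD (homogD homog_PX homog_PY) homog_PZ.
by rewrite /numj; do !apply: homogD; apply: homogXn; [exact: homog_PX | exact: homog_PY
  | exact: homog_PZ | exact: hXYZ].
Qed.

Lemma homog_den3 : homog scale3 3 den3.
Proof.
have hXY := homogD homog_PX homog_PY; have hXZ := homogD homog_PX homog_PZ.
have hYZ := homogD homog_PY homog_PZ.
exact: (homogM (homogM hXY hXZ) hYZ).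
Qed.
End Scale3.
Arguments scale3 {K}.

Section Numerator.
Variable K : comNzRingType.

Lemma numf_sum (b : {poly K}) : numf b = \sum_(i < size b) C3 b`_i * numj i.
Proof.
have eval3E (t : poly3 K) : eval3 b t = \sum_(i < size b) C3 b`_i * t ^+ i.
  rewrite /eval3 (horner_coef_wide _ (size_poly _ _)); apply: eq_bigr => i _.
  by rewrite coef_map_id0 // /C3 !polyC0.
by rewrite /numf !eval3E -!big_split; apply: eq_bigr => i _; rewrite !mulrDr.
Qed.

Lemma scale3_numf (b : {poly K}) :
  scale3 (numf b) = \poly_(i < size b) (C3 b`_i * numj i).
Proof.
rewrite numf_sum rmorph_sum poly_def; apply: eq_bigr => i _.
by rewrite rmorphM homog_C3 homog_numj mulr1 mulrA -polyCM mul_polyC.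
Qed.
End Numerator.

Section Denominator.
Variable K : idomainType.
Local Notation R := (poly3 K).

Definition sumXY : {poly {poly K}} := 'X%:P + 'X.

Lemma sumXY_neq0 : sumXY != 0.
Proof.
rewrite -size_poly_eq0 /sumXY addrC size_polyDl size_polyX //.
by rewrite size_polyC; case: (_ != 0).
Qed.

Lemma size_den3 : size (den3 : R) = 3.
Proof.
have hXY : PX + PY = sumXY%:P :> R by rewrite /sumXY polyCD.
have hXZ : size (PX + PZ : R) = 2 by rewrite /PX /PZ addrC size_XaddC.
have hYZ : size (PY + PZ : R) = 2 by rewrite /PY /PZ addrC size_XaddC.
rewrite /den3 hXY -mulrA size_Cmul ?sumXY_neq0 // size_mul ?hXZ ?hYZ //.
  by rewrite -size_poly_eq0 hXZ.
by rewrite -size_poly_eq0 hYZ.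
Qed.

Lemma den3_neq0 : den3 != 0 :> R.
Proof. by rewrite -size_poly_eq0 size_den3. Qed.
End Denominator.
Arguments sumXY {K}.

Section Char2Numerators.
Variable K : idomainType.
Hypothesis pcharK2 : (2 \in [pchar K])%N.
Local Notation R := (poly3 K).

Lemma pchar_poly3_2 : 2 \in [pchar R].
Proof. by rewrite !pchar_poly. Qed.

Lemma exprD_pow2 (x y : R) e : (x + y) ^+ (2 ^ e) = x ^+ (2 ^ e) + y ^+ (2 ^ e).
Proof. by rewrite exprDn_pchar // pnatX (pnatE _ (isT : prime 2)) pchar_poly3_2. Qed.

Lemma numj_small n : (n < 3)%N -> numj n = 0 :> R.
Proof.
have h2 := addrr_pchar2 pchar_poly3_2.
rewrite /numj; case: n => [|[|[|//]]] _.
- by rewrite !expr0 -addrA h2.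
- by rewrite !expr1 h2.
- by rewrite -(expn1 2) !exprD_pow2 h2.
Qed.

Lemma numj_pow2S e : numj (2 ^ e).+1 =
  sumXY%:P * 'X^(2 ^ e) + sumXY%:P ^+ (2 ^ e) * 'X
  + (PX ^+ (2 ^ e).+1 + PY ^+ (2 ^ e).+1 + sumXY%:P ^+ (2 ^ e).+1) :> R.
Proof.
rewrite /numj; have -> : PX + PY + PZ = sumXY%:P + 'X :> R by rewrite /sumXY polyCD.
set c : R := sumXY%:P; set n := (2 ^ e)%N.
rewrite !exprSr exprD_pow2.
have expand (x y z xn yn zn cn : R) : xn * x + yn * y + zn * z + (cn + zn) * (c + z) =
    c * zn + cn * z + (xn * x + yn * y + cn * c) + (zn * z + zn * z) by ring.
by rewrite expand addrr_pchar2 ?pchar_poly3_2 // addr0.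
Qed.

Lemma numj_pow2S_const e :
  PX ^+ (2 ^ e).+1 + PY ^+ (2 ^ e).+1 + sumXY%:P ^+ (2 ^ e).+1 =
  ('X%:P ^+ (2 ^ e).+1 + 'X ^+ (2 ^ e).+1 + sumXY ^+ (2 ^ e).+1)%:P :> R.
Proof. by rewrite /PX /PY -!polyC_exp -!polyCD. Qed.

Lemma size_numj_pow2S e : (0 < e)%N -> size (numj (2 ^ e).+1 : R) = (2 ^ e).+1.
Proof.
move=> e_gt0; have n_ge2 : (2 <= 2 ^ e)%N by rewrite -{1}(expn1 2) leq_exp2l.
have c0 : sumXY%:P ^+ (2 ^ e) != 0 :> R by rewrite expf_neq0 // polyC_eq0 sumXY_neq0.
rewrite numj_pow2S numj_pow2S_const -addrA size_polyDl.
  by rewrite size_Cmul ?sumXY_neq0 // size_polyXn.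
rewrite size_Cmul ?sumXY_neq0 // size_polyXn ltnS -polyC_exp.
rewrite (leq_trans (size_polyD _ _)) // geq_max (leq_trans (size_polyC_leq1 _)) ?andbT.
  by rewrite mul_polyC (leq_trans (size_scale_leq _ _)) // size_polyX.
exact: ltnW.
Qed.

Lemma deriv_numj_pow2S e :
  (0 < e)%N -> (numj (2 ^ e).+1 : R)^`() = (sumXY ^+ (2 ^ e))%:P.
Proof.
move=> e_gt0; rewrite numj_pow2S numj_pow2S_const -polyC_exp !derivD derivC.
rewrite !deriv_mulC derivXn derivX mulr1 addr0 -mulr_natr natrX.
by rewrite (pcharf0 pchar_poly3_2) expr0n eqn0Ngt e_gt0 !mulr0 add0r.
Qed.

End Char2Numerators.

Lemma dvd3_C3l (K : fieldType) c (r p : poly3 K) :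
  c != 0 -> dvd3 r (C3 c * p) -> dvd3 r p.
Proof.
move=> c_neq0 [w rw]; exists (C3 c^-1 * w).
by rewrite -mulrA -rw mulrA /C3 -!polyCM mulVf // !polyC1 mul1r.
Qed.

Section AbsIrreducibility.
Variable K : fieldType.
Hypothesis pcharK2 : (2 \in [pchar K])%N.
Local Notation R := (poly3 K).
Variables (k : nat) (g : {poly K}).
Hypotheses (k_ge2 : (2 <= k)%N) (size_g : (size g <= 2 ^ k.-1 + 2)%N).
Local Notation f := ('X^(2 ^ k + 1) + g).
Local Notation D := (2 ^ k).-2.
Variables (phi phid : R) (phij : nat -> R).
Hypotheses (phiE : phi * den3 = numf f) (phidE : phid * den3 = numj (2 ^ k + 1))
  (phijE : forall j, phij j * den3 = numj j).

Lemma pow2_halves : (2 ^ k = 2 ^ k.-1 + 2 ^ k.-1)%N /\ (2 <= 2 ^ k.-1)%N.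
Proof.
split; first by rewrite addnn -mul2n -expnS prednK // (leq_trans _ k_ge2).
by rewrite -{1}(expn1 2) leq_exp2l // -ltnS prednK // (leq_trans _ k_ge2).
Qed.

Lemma coef_f_top : f`_(2 ^ k + 1) = 1.
Proof.
rewrite coefD coefXn eqxx nth_default ?addr0 // (leq_trans size_g) //.
by have [] := pow2_halves; lia.
Qed.

Lemma coef_f_gap i : (2 ^ k.-1 + 2 <= i)%N -> i != (2 ^ k + 1)%N -> f`_i = 0.
Proof.
move=> hi /negPf i_top; rewrite coefD coefXn i_top add0r nth_default //.
exact: leq_trans size_g hi.
Qed.

Lemma coef_f_low i : (i <= 2 ^ k.-1 + 1)%N -> f`_i = g`_i.
Proof.
move=> hi; rewrite coefD coefXn (_ : (i == _) = false) ?add0r //.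
by apply/negbTE/eqP; have [] := pow2_halves; lia.
Qed.

Lemma phij_small n : (n < 3)%N -> phij n = 0.
Proof. by move=> n_lt3; apply: (mulIf (@den3_neq0 K)); rewrite phijE mul0r numj_small. Qed.

Lemma phij_top : phij (2 ^ k + 1) = phid.
Proof. by apply: (mulIf (@den3_neq0 K)); rewrite phijE phidE. Qed.

Lemma size_phid : size phid = D.+1.
Proof.
have k_gt0 : (0 < k)%N by exact: leq_trans k_ge2.
have := size_numj_pow2S pcharK2 k_gt0; rewrite -addn1 -phidE.
have phid_neq0 : phid != 0.
  apply: contra_eq_neq phidE => ->.
  by rewrite mul0r eq_sym -size_poly_eq0 addn1 size_numj_pow2S.
rewrite size_mul ?den3_neq0 // size_den3; have [] := pow2_halves.
by move: (size phid) => n; lia.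
Qed.

Definition Phi : {poly R} := \poly_(n < D.+1) (C3 f`_(n + 3) * phij (n + 3)).

Lemma scale3_phi : scale3 phi = Phi.
Proof.
have den3X_neq0 : den3%:P * 'X^3 != 0 :> {poly R}.
  by rewrite mulf_neq0 ?polyC_eq0 ?den3_neq0 // -size_poly_eq0 size_polyXn.
apply: (mulIf den3X_neq0); rewrite -homog_den3 -rmorphM phiE scale3_numf.
apply/polyP => n; rewrite homog_den3 mulrA coefMXn coefMC !coef_poly.
have [n_lt3 | n_ge3] := ltnP n 3; first by rewrite numj_small // mulr0 if_same.
rewrite subnK //; have [n_lt | n_ge] := ltnP (n - 3) D.+1.
  rewrite -mulrA phijE; case: ltnP => // size_le.
  by rewrite nth_default // /C3 !polyC0 mul0r.
rewrite [RHS]mul0r; case: ltnP => // _; rewrite coef_f_gap ?/C3 ?polyC0 ?mul0r //.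
  by have [] := pow2_halves; lia.
by apply/eqP; have [] := pow2_halves; lia.
Qed.

Lemma Phi_top_term : C3 f`_(D + 3) * phij (D + 3) = phid.
Proof.
rewrite (_ : (D + 3 = 2 ^ k + 1)%N); last by have [] := pow2_halves; lia.
by rewrite coef_f_top phij_top /C3 !polyC1 mul1r.
Qed.

Lemma coef_Phi_top : Phi`_D = phid.
Proof. by rewrite coef_poly ltnSn Phi_top_term. Qed.

Lemma size_Phi : size Phi = D.+1.
Proof. by apply: size_poly_eq; rewrite Phi_top_term -size_poly_eq0 size_phid. Qed.

Lemma lead_coef_Phi : lead_coef Phi = phid.
Proof. by rewrite lead_coefE size_Phi coef_Phi_top. Qed.

Lemma coef_Phi_gap i : (D./2 <= i < D)%N -> Phi`_i = 0.
Proof.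
move=> /andP[lo hi]; rewrite coef_poly ltnS ltnW // coef_f_gap ?/C3 ?polyC0 ?mul0r //.
  by have [] := pow2_halves; lia.
by apply/eqP; have [] := pow2_halves; lia.
Qed.

Lemma phid_factors_coprime a b :
  a * b = phid -> coprimep (map_poly (@tofrac _) a) (map_poly (@tofrac _) b).
Proof.
have k_gt0 : (0 < k)%N by exact: leq_trans k_ge2.
move=> ab; apply: (@coprimep_of_dvdp_deriv_const _ _ _
  (map_poly (@tofrac _) (numj (2 ^ k + 1))) (tofrac (sumXY ^+ (2 ^ k)))).
- by rewrite tofrac_eq0 expf_neq0 // sumXY_neq0.
- by rewrite deriv_map addn1 deriv_numj_pow2S // map_polyC.
by rewrite -rmorphM ab -phidE rmorphM dvdp_mulr.
Qed.

Lemma dvd3_coef_Phi P Q : phi = P * Q -> (size (scale3 Q) <= size (scale3 P))%N ->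
  forall n, dvd3 Q Phi`_n.
Proof.
move=> PQ le_QP.
have PQs : scale3 P * scale3 Q = Phi by rewrite -rmorphM -PQ scale3_phi.
have scale3Q : scale3 Q = (lead_coef (scale3 Q))%:P * 'X^((size (scale3 Q)).-1).
  apply: (@factor_monomial_of_gap _ (scale3 P)); rewrite ?PQs.
  - by rewrite -size_poly_eq0 size_Phi.
  - exact: size_coef_scale_lift.
  - exact: size_coef_scale_lift.
  - exact: le_QP.
  - by rewrite lead_coef_Phi size_Phi size_phid.
  - by rewrite size_Phi; exact: coef_Phi_gap.
  by rewrite lead_coef_Phi; exact: phid_factors_coprime.
have lead_scale3Q : lead_coef (scale3 Q) = Q.
  by rewrite -[RHS]scale3_horner1 [in RHS]scale3Q hornerCM hornerXn expr1n mulr1.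
move=> n; rewrite -PQs scale3Q lead_scale3Q mulrA coefMXn.
by case: ifP => _; [exists 0; rewrite mul0r | rewrite coefMC; eexists].
Qed.

Theorem irreducible3_phi j : (j <= 2 ^ k.-1 + 1)%N -> g`_j != 0 ->
  phij j != 0 -> relprime3 (phij j) phid -> irreducible3 phi.
Proof.
move=> j_le gj_neq0 phij_neq0 phij_phid.
split.
  case=> c phiC; have := size_Phi; rewrite -scale3_phi phiC homog_C3 mulr1.
  move=> size_C3c; have := size_polyC_leq1 (C3 c).
  by rewrite size_C3c; have [] := pow2_halves; lia.
have factor_const P Q : phi = P * Q -> (size (scale3 Q) <= size (scale3 P))%N -> const3 Q.
  move=> PQ le_QP; have dvdQ := dvd3_coef_Phi PQ le_QP.
  apply: phij_phid; last by rewrite -coef_Phi_top.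
  have j_ge3 : (3 <= j)%N.
    by rewrite leqNgt; apply: contra phij_neq0 => /phij_small ->.
  apply: (@dvd3_C3l _ f`_j); first by rewrite coef_f_low.
  have := dvdQ (j - 3)%N; rewrite coef_poly subnK // ifT //.
  by have [] := pow2_halves; lia.
move=> P Q PQ; have [le_QP | /ltnW le_PQ] := leqP (size (scale3 Q)) (size (scale3 P)).
  by right; exact: factor_const PQ le_QP.
by left; apply: factor_const le_PQ; rewrite mulrC.
Qed.
End AbsIrreducibility.

Theorem mainTheorem8
  (F : finFieldType) (m : nat) (hF : #|F| = (2 ^ m)%N)
  (K : closedFieldType) (iota : {rmorphism F -> K}) (hK : integralRange iota)
  (k : nat) (hk : (2 <= k)%N)
  (g : {poly F}) (hg : (size g <= 2 ^ k.-1 + 2)%N)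
  (phi phid : poly3 K) (phij : nat -> poly3 K)
  (hphi : phi * den3 = numf (map_poly iota ('X ^+ (2 ^ k + 1) + g)))
  (hphid : phid * den3 = numj (2 ^ k + 1))
  (hphij : forall j, phij j * den3 = numj j)
  (hj : exists j : nat, [/\ (j <= 2 ^ k.-1 + 1)%N, g`_j != 0,
          phij j != 0 & relprime3 (phij j) phid]) :
  irreducible3 phi.
Proof.
have pcharK2 : (2 \in [pchar K])%N.
  by apply: (rmorph_pchar iota); apply: card_finPcharP hF _.
have [j [j_le gj_neq0 phij_neq0 phij_phid]] := hj.
rewrite rmorphD rmorphXn /= map_polyX in hphi.
apply: (irreducible3_phi pcharK2 hk _ hphi hphid hphij j_le _ phij_neq0 phij_phid).
  by rewrite size_map_poly.
by rewrite coef_map fmorph_eq0.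
Qed.
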